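(* For positive integers $a<b\le c$, $$S(bac;t,x)=\frac{t^3x^{a+b+c}\bigl(1+tx^c(1+x+\cdots+x^{b-a-1})\bigr)}{(1-x-tx)\,\psi_{a,b,c}(t,x)+t^3x^{a+b+c}\bigl(1+tx^c(1+x+\cdots+x^{b-a-1})\bigr)},$$ where $$\psi_{a,b,c}(t,x)=(1-x)^2+tx^c(1-x)+t^2x^{a+c}+t^3x^{a+2c}(1+x+\cdots+x^{b-a-1}).$$
   Context: $\mathbb{P}^*$ is the set of finite words over the positive integers (usual order); $bac$ denotes the three-letter word with letters $b,a,c$. For $w=w_1\ldots w_n$, $\mathrm{wt}(w)=t^nx^{\sum_i w_i}$. An embedding of $u$ into $w$ is a string of $|u|$ consecutive letters of $w$ whose $i$-th letter is $\ge$ the $i$-th letter of $u$ for every $i$. $\mathcal{S}(u)$ is the set of words $w$ admitting an embedding of $u$ such that the last $|u|$ letters of $w$ form the only embedding of $u$ into $w$, and $S(u;t,x)=\sum_{w\in\mathcal{S}(u)}\mathrm{wt}(w)$. *)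

From HB Require Import structures.
From mathcomp Require Import all_boot all_order all_algebra.
Set Implicit Arguments. Unset Strict Implicit. Unset Printing Implicit Defensive.
Import GRing.Theory.

(* Words over positive integers are represented as seq nat (letters >= 1). *)

Definition embeds_at (u w : seq nat) (i : nat) : bool :=
  (i + size u <= size w) &&
  all (fun j => nth 0 u j <= nth 0 w (i + j)) (iota 0 (size u)).

Definition inS (u w : seq nat) : bool :=
  (size u <= size w) &&
  all (fun i => embeds_at u w i == (i == size w - size u)) (iota 0 (size w).+1).

(* Coefficient of t^n x^m in S(u;t,x): number of words in S(u) of length n
   and letter sum m (letters are positive, hence at most m). *)
Definition Scoef (u : seq nat) (n m : nat) : nat :=
  #|[set w : n.-tuple 'I_m.+1 |
      [&& all (fun i : 'I_m.+1 => 0 < (i : nat)) w,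
          sumn (map val w) == m &
          inS u (map val w)]]|.

Local Open Scope ring_scope.

(* Bivariate polynomials in t, x with integer coefficients:
   {poly {poly int}}, outer variable t, inner variable x. *)
Definition tv : {poly {poly int}} := 'X.
Definition xv : {poly {poly int}} := ('X : {poly int})%:P.

Definition geomx (k : nat) : {poly {poly int}} := \sum_(i < k) xv ^+ i.

Definition psi (a b c : nat) : {poly {poly int}} :=
  (1 - xv) ^+ 2 + tv * xv ^+ c * (1 - xv) + tv ^+ 2 * xv ^+ (a + c)%N
  + tv ^+ 3 * xv ^+ (a + 2 * c)%N * geomx (b - a).

Definition numS (a b c : nat) : {poly {poly int}} :=
  tv ^+ 3 * xv ^+ (a + b + c)%N * (1 + tv * xv ^+ c * geomx (b - a)).

Definition denS (a b c : nat) : {poly {poly int}} :=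
  (1 - xv - tv * xv) * psi a b c + numS a b c.

Definition coef2 (p : {poly {poly int}}) (i j : nat) : int := (p`_i)`_j.

(* Let S, C, Q, D be the generating functions of the words of S(bac) whose first
   two letters are at least (1, 1), (c, 1), (a, c) and (c, c) respectively, and
   L_k = t x^k / (1 - x) the generating function of a single letter >= k.
   Prepending a letter y to a word w' of S(bac) gives a word of S(bac) unless it
   creates an embedding at the front, i.e. unless y >= b, w'_1 >= a, w'_2 >= c;
   together with the words of length 3 this yields four linear equations
     S + L_b Q = L_b L_a L_c + L_1 S,     C + L_c Q = L_c L_a L_c + L_c S,
     Q + L_b D = L_b L_c L_c + L_a C,     D + L_c D = L_c L_c L_c + L_c C.
   Eliminating C, Q, D and clearing the denominator (1 - x)^3 gives the formula.
   Power series are represented by polynomials truncated at t^n x^m, i.e. the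
   computation takes place modulo an ideal in which 1 - x is cancellable. *)

From Stdlib Require Import Setoid.
From HB Require Import structures.
From mathcomp Require Import all_boot all_order all_algebra ring.
Set Implicit Arguments. Unset Strict Implicit. Unset Printing Implicit Defensive.
Import GRing.Theory.

Fixpoint compositions (n m : nat) : seq (seq nat) :=
  if n is n'.+1 then [seq y :: w | y <- iota 1 m, w <- compositions n' (m - y)]
  else if m == 0 then [:: [::]] else [::].

Definition positive_word (w : seq nat) := all (fun y => 0 < y) w.

Lemma mem_compositions n m w :
  (w \in compositions n m) = [&& size w == n, positive_word w & sumn w == m].
Proof.
elim: n m w => [|n IHn] m w /=.
  by case: w => [|y w]; case: m.
apply/allpairsPdep/idP => [[y [v [y_in v_in ->]]]|].
  move: y_in v_in; rewrite mem_iota add1n ltnS IHn.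
  move=> /andP [y_gt0 y_le] /and3P [/eqP <- pos /eqP sum_v] /=.
  by rewrite sum_v (subnKC y_le) !eqxx y_gt0 pos.
case: w => [|y w] //= /and3P [sz /andP [y_gt0 pos] /eqP <-].
exists y, w; split => //; first by rewrite mem_iota y_gt0 add1n ltnS leq_addr.
by rewrite IHn -eqSS sz pos addKn eqxx.
Qed.

Lemma uniq_compositions n m : uniq (compositions n m).
Proof.
elim: n m => [|n IHn] m /=; first by case: (m == 0).
apply/allpairs_uniq_dep => [|y _|]; rewrite ?iota_uniq //.
by case=> [y w] [y' w'] _ _ [-> ->].
Qed.

Definition wcount (P : pred (seq nat)) n m := count P (compositions n m).

Definition cons_ge (k : nat) (P : pred (seq nat)) : pred (seq nat) :=
  fun w => if w is y :: w' then (k <= y) && P w' else false.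

Lemma wcount_nil n m : wcount (@nilp nat) n m = (n == 0) && (m == 0).
Proof.
case: n => [|n]; first by rewrite /wcount /=; case: (m == 0).
apply/eqP; rewrite [X in _ == X]/= eqn0Ngt -has_count; apply/hasPn => w.
by rewrite mem_compositions => /and3P [/eqP sz _ _]; rewrite /nilp sz.
Qed.

Lemma wcount_cons_ge0 k P m : wcount (cons_ge k P) 0 m = 0.
Proof. by rewrite /wcount /=; case: (m == 0). Qed.

Lemma wcount_cons_ge k P n m : 0 < k ->
  wcount (cons_ge k P) n.+1 m = \sum_(y < m.+1) (k <= y) * wcount P n (m - y).
Proof.
move=> k_gt0; rewrite -(big_mkord xpredT (fun y => (k <= y) * wcount P n (m - y))).
rewrite big_nat_recl // leqNgt k_gt0 /= add0n.
rewrite /wcount /= count_flatten sumnE big_map (iotaDl 1 0) big_map /index_iota subn0.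
rewrite big_map.
apply: eq_bigr => y _; rewrite count_map add1n.
case: (boolP (k <= y.+1)) => hk; rewrite ?mul1n ?mul0n.
  by apply: eq_count => w /=; rewrite hk.
rewrite -(count_pred0 (compositions n (m - y.+1))).
by apply: eq_count => w /=; rewrite (negbTE hk).
Qed.

Lemma Scoef_wcount u n m : Scoef u n m = wcount (inS u) n m.
Proof.
rewrite /Scoef cardE /wcount -size_filter.
set A := [set w : n.-tuple 'I_m.+1 | _].
pose f (w : n.-tuple 'I_m.+1) := map val w.
have f_inj : injective f by move=> w1 w2 /(inj_map val_inj) /val_inj.
rewrite -(size_map f); apply/perm_size/uniq_perm.
- by rewrite map_inj_uniq // enum_uniq.
- exact/filter_uniq/uniq_compositions.
move=> w; rewrite mem_filter mem_compositions; apply/mapP/idP.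
  case=> v; rewrite mem_enum inE => /and3P [pos /eqP sum_v inS_v] ->.
  by rewrite /f inS_v size_map size_tuple eqxx /positive_word all_map sum_v eqxx /= andbT.
case/andP => inS_w /and3P [/eqP sz pos /eqP sum_w].
have w_small : all (fun y => y < m.+1) w.
  by apply/allP => y wy; rewrite ltnS -sum_w (perm_sumn (perm_to_rem wy)) leq_addr.
have sz_v : size (map (@inord m) w) == n by rewrite size_map sz.
have fvK : f (Tuple sz_v) = w.
  by rewrite /f /= -map_comp map_id_in // => y /(allP w_small) /inordK.
exists (Tuple sz_v) => //.
rewrite mem_enum inE -/(f _) fvK inS_w sum_w eqxx !andbT.
apply/allP => i /mapP [y wy ->]; rewrite inordK ?(allP pos) //; exact: (allP w_small).
Qed.

Lemma embeds_at_cons u y w i : embeds_at u (y :: w) i.+1 = embeds_at u w i.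
Proof. by rewrite /embeds_at /= addSn ltnS. Qed.

Lemma embeds_at_small u w i : size w < i + size u -> embeds_at u w i = false.
Proof. by rewrite /embeds_at ltnNge => /negbTE ->. Qed.

Lemma inS_size u w : inS u w -> size u <= size w.
Proof. by case/andP. Qed.

Lemma inS_cons u y w : size u <= size w ->
  inS u (y :: w) = inS u w && ~~ embeds_at u (y :: w) 0.
Proof.
move=> le_uw; rewrite /inS /= (leqW le_uw) le_uw subSn //=.
rewrite eqbF_neg embeds_at_cons eqSS (iotaDl 1 1) all_map andbC.
congr (_ && _ && _); apply: eq_all => i; rewrite /= add1n embeds_at_cons eqSS.
Qed.

Lemma inS_exact u w : size w = size u -> inS u w = embeds_at u w 0.
Proof.
move=> sz; rewrite /inS sz leqnn subnn /= eqb_id -[RHS]andbT; congr (_ && _).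
apply/allP => i; rewrite mem_iota => /andP [i_gt0 _].
by rewrite embeds_at_small ?(gtn_eqF i_gt0) // sz -{1}[size u]add0n ltn_add2r.
Qed.

Definition inS_ge u k l : pred (seq nat) :=
  fun w => [&& inS u w, k <= nth 0 w 0 & l <= nth 0 w 1].

Ltac case_leqs := repeat match goal with |- context [?m <= ?n] => case: (m <= n) end.

Lemma inS_bac_prepend a b c k l w : positive_word w ->
  inS_ge [:: b; a; c] k l w + cons_ge (maxn k b) (inS_ge [:: b; a; c] (maxn l a) c) w
  = cons_ge (maxn k b) (cons_ge (maxn l a) (cons_ge c (@nilp nat))) w
    + cons_ge k (inS_ge [:: b; a; c] l 1) w.
Proof.
rewrite /inS_ge; case: w => [|y [|y0 [|y1 [|y2 w]]]] //= pos; rewrite ?andbF //.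
  by rewrite inS_exact // /embeds_at /= !geq_max; case_leqs.
case/and5P: pos => _ _ -> _ _; rewrite inS_cons // /embeds_at /= !geq_max.
by case: (inS _ _); case_leqs.
Qed.

Local Open Scope ring_scope.

Record is_ideal (R : comPzRingType) (I : R -> Prop) : Prop := IsIdeal {
  ideal0 : I 0;
  idealD : forall p q, I p -> I q -> I (p + q);
  idealMl : forall r p, I p -> I (r * p) }.

Definition eqmod (R : comPzRingType) (I : R -> Prop) (p q : R) := I (p - q).
Notation "p = q %[mod I ]" := (eqmod I p q) : ring_scope.

Section CongruenceModIdeal.
Variables (R : comPzRingType) (I : R -> Prop).
Hypothesis I_ideal : is_ideal I.

Lemma eqmod_eq p q : p = q -> p = q %[mod I].
Proof. by move=> ->; rewrite /eqmod subrr; exact: ideal0 I_ideal. Qed.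

Lemma eqmod_sym p q : p = q %[mod I] -> q = p %[mod I].
Proof. by move=> pq; rewrite /eqmod -opprB -mulN1r; exact (idealMl I_ideal _ pq). Qed.

Lemma eqmod_trans p q r : p = q %[mod I] -> q = r %[mod I] -> p = r %[mod I].
Proof.
move=> pq qr; rewrite /eqmod (_ : p - r = (p - q) + (q - r)); last by ring.
exact (idealD I_ideal pq qr).
Qed.

Add Relation R (eqmod I)
  reflexivity proved by (fun p => eqmod_eq (erefl p))
  symmetry proved by eqmod_sym
  transitivity proved by eqmod_trans as eqmod_rel.

Add Morphism (@GRing.add R) with signature eqmod I ==> eqmod I ==> eqmod I as eqmodD.
Proof.
move=> p p' pp' q q' qq'; rewrite /eqmod (_ : _ - _ = (p - p') + (q - q')); last by ring.
exact (idealD I_ideal pp' qq').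
Qed.

Add Morphism (@GRing.opp R) with signature eqmod I ==> eqmod I as eqmodN.
Proof.
move=> p p' pp'; rewrite /eqmod (_ : _ - _ = -1 * (p - p')); last by ring.
exact (idealMl I_ideal _ pp').
Qed.

Add Morphism (@GRing.mul R) with signature eqmod I ==> eqmod I ==> eqmod I as eqmodM.
Proof.
move=> p p' pp' q q' qq'.
rewrite /eqmod (_ : _ - _ = q * (p - p') + p' * (q - q')); last by ring.
exact (idealD I_ideal (idealMl I_ideal _ pp') (idealMl I_ideal _ qq')).
Qed.

Variables (t x : R) (L : nat -> R).
Hypothesis L_geom : forall k, (1 - x) * L k = t * x ^+ k %[mod I].
Hypothesis cancel_1x : forall p q, (1 - x) * p = (1 - x) * q %[mod I] -> p = q %[mod I].

Variables (a b c : nat) (S C Q D : R).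
Hypothesis leab : (a <= b)%N.
Hypotheses
  (eqS : S + L b * Q = L b * (L a * L c) + L 1 * S %[mod I])
  (eqC : C + L c * Q = L c * (L a * L c) + L c * S %[mod I])
  (eqQ : Q + L b * D = L b * (L c * L c) + L a * C %[mod I])
  (eqD : D + L c * D = L c * (L c * L c) + L c * C %[mod I]).

Let gm := \sum_(i < b - a) x ^+ i.
Let K := L a + L a * L c - L b * L c.
Let denL := (1 - L 1) * (1 + L c + L c * K) + L b * L c * K.
Let numL := L b * L c * K.
Let kappa := t * x ^+ a * (1 + t * x ^+ c * gm).

Lemma S_denL : S * denL = numL %[mod I].
Proof.
(* The multipliers come from eliminating C, Q and D from the four equations. *)
have -> : S * denL = numL
   + (1 + L c + L c * K) * ((S + L b * Q) - (L b * (L a * L c) + L 1 * S))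
   - L b * K * ((C + L c * Q) - (L c * (L a * L c) + L c * S))
   - L b * (1 + L c) * ((Q + L b * D) - (L b * (L c * L c) + L a * C))
   + L b ^+ 2 * ((D + L c * D) - (L c * (L c * L c) + L c * C)).
  by rewrite /denL /numL /K; ring.
rewrite eqS eqC eqQ eqD; apply: eqmod_eq; ring.
Qed.

Lemma K_geom : (1 - x) * K = kappa %[mod I].
Proof.
apply: cancel_1x.
have -> : (1 - x) * ((1 - x) * K) = (1 - x) * ((1 - x) * L a)
    + ((1 - x) * L a) * ((1 - x) * L c) - ((1 - x) * L b) * ((1 - x) * L c).
  by rewrite /K; ring.
rewrite !L_geom.
have -> : (1 - x) * kappa = t * x ^+ a * ((1 - x) + t * x ^+ c * ((1 - x) * gm)).
  by rewrite /kappa; ring.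
have geom : (1 - x) * gm = 1 - x ^+ (b - a).
  by rewrite /gm -opprB mulNr -subrX1 opprB.
have xb : x ^+ b = x ^+ a * x ^+ (b - a) by rewrite -exprD subnKC.
rewrite geom xb; apply: eqmod_eq; ring.
Qed.

Let num := t ^+ 3 * x ^+ (a + b + c) * (1 + t * x ^+ c * gm).
Let den := (1 - x - t * x) * ((1 - x) ^+ 2 + t * x ^+ c * (1 - x) + t ^+ 2 * x ^+ (a + c)
  + t ^+ 3 * x ^+ (a + 2 * c) * gm) + num.

Lemma numL_scaled : (1 - x) ^+ 3 * numL = num %[mod I].
Proof.
have -> : (1 - x) ^+ 3 * numL = ((1 - x) * L b) * ((1 - x) * L c) * ((1 - x) * K).
  by rewrite /numL; ring.
rewrite !L_geom K_geom; apply: eqmod_eq.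
by rewrite /num /kappa !exprD; ring.
Qed.

Lemma denL_scaled : (1 - x) ^+ 3 * denL = den %[mod I].
Proof.
have -> : (1 - x) ^+ 3 * denL = ((1 - x) - (1 - x) * L 1)
    * ((1 - x) ^+ 2 + (1 - x) * ((1 - x) * L c) + ((1 - x) * L c) * ((1 - x) * K))
    + (1 - x) ^+ 3 * numL.
  by rewrite /denL /numL; ring.
rewrite numL_scaled !L_geom K_geom; apply: eqmod_eq.
by rewrite /den /kappa mul2n -addnn !exprD; ring.
Qed.

Lemma bac_gf_eqmod : den * S = num %[mod I].
Proof.
rewrite -denL_scaled -numL_scaled.
have -> : (1 - x) ^+ 3 * denL * S = (1 - x) ^+ 3 * (S * denL) by ring.
rewrite S_denL; reflexivity.
Qed.
End CongruenceModIdeal.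

Definition negligible (N M : nat) (p : {poly {poly int}}) : Prop :=
  forall i j, (i <= N)%N -> (j <= M)%N -> coef2 p i j = 0.

Lemma coef2B p q i j : coef2 (p - q) i j = coef2 p i j - coef2 q i j.
Proof. by rewrite /coef2 !coefB. Qed.

Lemma coef2D p q i j : coef2 (p + q) i j = coef2 p i j + coef2 q i j.
Proof. by rewrite /coef2 !coefD. Qed.

Lemma coef2M p q i j : coef2 (p * q) i j =
  \sum_(k < i.+1) \sum_(l < j.+1) coef2 p k l * coef2 q (i - k) (j - l).
Proof. by rewrite /coef2 coefM coef_sum; apply: eq_bigr => k _; rewrite coefM. Qed.

Lemma coef2_poly n1 n2 (E : nat -> nat -> int) i j :
  coef2 (\poly_(i < n1) \poly_(j < n2) E i j) i j =
  if ((i < n1) && (j < n2))%N then E i j else 0.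
Proof. by rewrite /coef2 coef_poly; case: (i < n1)%N; rewrite ?coef_poly ?coef0. Qed.

Lemma coef2_tC (q : {poly int}) i j :
  coef2 (tv * q%:P) i j = if i == 1%N then q`_j else 0.
Proof.
by rewrite /coef2 /tv coefXM; case: i => [|[|i]]; rewrite /= ?coef0 ?coefC /= ?if_same.
Qed.

Lemma coef2_1subx p i j :
  coef2 ((1 - xv) * p) i j = coef2 p i j - (if j is j'.+1 then coef2 p i j' else 0).
Proof. by rewrite /coef2 mulrBl mul1r coefB coefCM coefB coefXM; case: j. Qed.

Lemma negligible_ideal N M : is_ideal (negligible N M).
Proof.
split=> [i j _ _ | p q np nq i j hi hj | r p np i j hi hj].
- by rewrite /coef2 !coef0.
- by rewrite coef2D np ?nq ?addr0.
rewrite coef2M big1 // => k _; rewrite big1 // => l _.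
by rewrite np ?mulr0 // (leq_trans (leq_subr _ _)).
Qed.

Lemma negligible_cancel N M p q :
  (1 - xv) * p = (1 - xv) * q %[mod negligible N M] -> p = q %[mod negligible N M].
Proof.
rewrite /eqmod -mulrBr; move: (p - q) => r nr i j hi.
elim: j => [|j IHj] hj; have := nr i _ hi hj; rewrite coef2_1subx ?subr0 //.
by rewrite IHj ?subr0 // ltnW.
Qed.

Lemma negligible_coef2 N M p q : p = q %[mod negligible N M] -> coef2 p N M = coef2 q N M.
Proof. by move=> pq; apply/eqP; rewrite -subr_eq0 -coef2B pq. Qed.

Definition is_gf N M (p : {poly {poly int}}) (P : pred (seq nat)) : Prop :=
  forall i j, (i <= N)%N -> (j <= M)%N -> coef2 p i j = (wcount P i j)%:Z.

Definition gfun N M P : {poly {poly int}} :=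
  \poly_(i < N.+1) \poly_(j < M.+1) (wcount P i j)%:Z.

(* [t (x^k + x^(k+1) + ... + x^M)], the series [t x^k / (1 - x)] truncated in [x]. *)
Definition letter M k : {poly {poly int}} := tv * (\poly_(j < M.+1) ((k <= j)%N)%:R)%:P.

Lemma is_gf_gfun N M P : is_gf N M (gfun N M P) P.
Proof. by move=> i j hi hj; rewrite coef2_poly !ltnS hi hj. Qed.

Lemma is_gf1 N M : is_gf N M 1 (@nilp nat).
Proof.
move=> i j _ _; rewrite wcount_nil /coef2 coef1.
by case: i => [|i] /=; rewrite ?coef1 ?coef0 ?natz.
Qed.

Lemma is_gf_letterM N M k p P :
  (0 < k)%N -> is_gf N M p P -> is_gf N M (letter M k * p) (cons_ge k P).
Proof.
move=> k_gt0 gfp i j hi hj; rewrite /letter -mulrA /coef2 /tv coefXM.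
case: i hi => [|i] hi /=; first by rewrite coef0 wcount_cons_ge0.
rewrite coefCM coefM wcount_cons_ge // -natz natr_sum; apply: eq_bigr => l _.
rewrite coef_poly ltnS (leq_trans (leq_ord l) hj) natrM natz; congr (_ * _).
by have := gfp i (j - l)%N (ltnW hi) (leq_trans (leq_subr _ _) hj); rewrite /coef2 natz.
Qed.

Lemma is_gf_letter N M k :
  (0 < k)%N -> is_gf N M (letter M k) (cons_ge k (@nilp nat)).
Proof. by move=> k_gt0; rewrite -[letter M k]mulr1; apply/is_gf_letterM/is_gf1. Qed.

Lemma letter_geom N M k : (1 - xv) * letter M k = tv * xv ^+ k %[mod negligible N M].
Proof.
move=> i j _ hj; rewrite /letter mulrCA /xv -polyC_exp -polyC1 -polyCB -polyCM.
rewrite -mulrBr -polyCB coef2_tC; case: (i == 1%N) => //.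
rewrite mulrBl mul1r !coefB coefXM coefXn !coef_poly ltnS hj.
case: j hj => [|j] hj /=; first by rewrite subr0 leqn0 eq_sym subrr.
rewrite ltnS (ltnW hj) leq_eqVlt ltnS [(j.+1 == k)%N]eq_sym.
by case: eqP => [->|_] /=; rewrite ?ltnn subrr ?subr0.
Qed.

Lemma is_gf_eqmod N M p1 p2 q1 q2 P1 P2 Q1 Q2 :
  is_gf N M p1 P1 -> is_gf N M p2 P2 -> is_gf N M q1 Q1 -> is_gf N M q2 Q2 ->
  (forall w, positive_word w -> P1 w + P2 w = Q1 w + Q2 w)%N ->
  p1 + p2 = q1 + q2 %[mod negligible N M].
Proof.
move=> gp1 gp2 gq1 gq2 pw i j hi hj.
rewrite coef2B !coef2D gp1 // gp2 // gq1 // gq2 // -!PoszD; apply/eqP.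
rewrite subr_eq0 eqz_nat /wcount -!sumn_count !sumnE !big_map -!big_split; apply/eqP.
by apply: eq_big_seq => w; rewrite mem_compositions => /and3P [_ pos _]; exact: pw.
Qed.

Lemma bac_equation N M a b c k l : (0 < a)%N -> (0 < c)%N -> (0 < k)%N ->
  gfun N M (inS_ge [:: b; a; c] k l)
    + letter M (maxn k b) * gfun N M (inS_ge [:: b; a; c] (maxn l a) c)
  = letter M (maxn k b) * (letter M (maxn l a) * letter M c)
    + letter M k * gfun N M (inS_ge [:: b; a; c] l 1) %[mod negligible N M].
Proof.
move=> a_gt0 c_gt0 k_gt0.
have kb_gt0 : (0 < maxn k b)%N by rewrite leq_max k_gt0.
have la_gt0 : (0 < maxn l a)%N by rewrite leq_max a_gt0 orbT.
apply: is_gf_eqmod (@inS_bac_prepend a b c k l).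
- exact: is_gf_gfun.
- exact/(is_gf_letterM kb_gt0)/is_gf_gfun.
- exact/(is_gf_letterM kb_gt0)/(is_gf_letterM la_gt0)/is_gf_letter.
- exact/(is_gf_letterM k_gt0)/is_gf_gfun.
Qed.

Lemma wcount_inS_ge1 u n m :
  (1 < size u)%N -> wcount (inS_ge u 1 1) n m = wcount (inS u) n m.
Proof.
move=> u_gt1; apply: eq_in_count => w; rewrite mem_compositions => /and3P [_ pos _].
rewrite /inS_ge; case: (boolP (inS u w)) => //= /inS_size le_uw.
by rewrite !(allP pos) ?mem_nth // (leq_trans _ le_uw) // ltnW.
Qed.

Theorem theorem5 (a b c : nat) (ha : (0 < a)%N) (hab : (a < b)%N) (hbc : (b <= c)%N) :
  forall n m : nat,
    \sum_(i < n.+1) \sum_(j < m.+1)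
        coef2 (denS a b c) i j * (Scoef [:: b; a; c] (n - i) (m - j))%:Z
    = coef2 (numS a b c) n m.
Proof.
move=> n m.
have b_gt0 : (0 < b)%N := leq_ltn_trans (leq0n a) hab.
have c_gt0 : (0 < c)%N := leq_trans b_gt0 hbc.
have eqS := @bac_equation n m a b c 1 1 ha c_gt0 isT.
have eqC := @bac_equation n m a b c c 1 ha c_gt0 c_gt0.
have eqQ := @bac_equation n m a b c a c ha c_gt0 ha.
have eqD := @bac_equation n m a b c c c ha c_gt0 c_gt0.
have le_ac : (a <= c)%N := ltnW (leq_trans hab hbc).
rewrite (maxn_idPr b_gt0) (maxn_idPr ha) in eqS.
rewrite (maxn_idPl hbc) (maxn_idPr ha) in eqC.
rewrite (maxn_idPr (ltnW hab)) (maxn_idPl le_ac) in eqQ.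
rewrite (maxn_idPl hbc) (maxn_idPl le_ac) in eqD.
have key : denS a b c * gfun n m (inS_ge [:: b; a; c] 1 1) = numS a b c
    %[mod negligible n m].
  exact (bac_gf_eqmod (negligible_ideal n m) (@letter_geom n m)
    (@negligible_cancel n m) (ltnW hab) eqS eqC eqQ eqD).
rewrite -(negligible_coef2 key) coef2M; apply: eq_bigr => i _; apply: eq_bigr => j _.
by rewrite is_gf_gfun ?leq_subr // wcount_inS_ge1 // Scoef_wcount.
Qed.
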